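(* Let $K=\mathbb{Q}(\alpha,\sqrt{-2})$ where $\alpha$ is a root of $x^3-93x+124$ (the field $\Gamma_8$), let $F=\mathbb{Q}(\alpha)$, and $\rho$ complex conjugation. Let $\mathfrak{p}$ be a prime of $F$ above $2$ and $\mathfrak{P}$ the prime of $K$ above $\mathfrak{p}$ (one has $\mathfrak{p}\mathcal{O}_K=\mathfrak{P}^2$), and let $\chi_{\mathfrak{p}}:F_{\mathfrak{p}}^\times\to\{\pm1\}$ be the quadratic character associated with $K_{\mathfrak{P}}/F_{\mathfrak{p}}$. Then there exists a homomorphism $\widetilde{\chi_{\mathfrak{P}}}:\mathcal{O}_{K_{\mathfrak{P}}}^\times\to\{\pm1\}$ such that $\widetilde{\chi_{\mathfrak{P}}}|_{\mathcal{O}_{F_{\mathfrak{p}}}^\times}=\chi_{\mathfrak{p}}|_{\mathcal{O}_{F_{\mathfrak{p}}}^\times}$ and $\widetilde{\chi_{\mathfrak{P}}}(x^\rho)=\widetilde{\chi_{\mathfrak{P}}}(x)^\rho$ for all $x\in\mathcal{O}_{K_{\mathfrak{P}}}^\times$.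
   Context: $K$ is a CM field cyclic of degree 6 over $\mathbb{Q}$ with cubic subfield $F$; in $F$ the prime $2$ splits completely and each prime of $F$ above $2$ ramifies in $K$, so $\rho$ fixes $\mathfrak{P}$ and acts on $K_{\mathfrak{P}}$. *)

(* The 2-adic integers Z_2 are built from scratch as
   coherent sequences of residues modulo 2^n (the inverse limit of Z/2^n),
   and O_{K_P} = Z_2[sqrt(-2)] as pairs (a,b) <-> a + b*sqrt(-2). *)
From mathcomp Require Import all_boot all_algebra.
From mathcomp Require Import boolp.

Set Implicit Arguments.
Unset Strict Implicit.
Unset Printing Implicit Defensive.

Definition coh (f : nat -> nat) : Prop :=
  forall n, f n < 2 ^ n /\ f n.+1 %% 2 ^ n = f n.

Record Z2 := MkZ2 { z2d : nat -> nat ; z2coh : coh z2d }.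

Lemma coh_mod (h : nat -> nat) :
  (forall n, h n.+1 = h n %[mod 2 ^ n]) -> coh (fun n => h n %% 2 ^ n).
Proof.
move=> H n; split; first by rewrite ltn_pmod // expn_gt0.
rewrite (modn_dvdm _ (dvdn_exp2l 2 (leqnSn n))); exact: H.
Qed.

Definition z2mod (h : nat -> nat) (H : forall n, h n.+1 = h n %[mod 2 ^ n]) : Z2 :=
  MkZ2 (coh_mod H).

Lemma z2nat_coh (k : nat) : forall n, (fun _ : nat => k) n.+1 = k %[mod 2 ^ n].
Proof. by []. Qed.
Definition z2nat (k : nat) : Z2 := z2mod (z2nat_coh k).

Lemma z2m1_coh : coh (fun n => 2 ^ n - 1).
Proof.
move=> n; split; first by rewrite subn1 prednK ?expn_gt0 // leqnn.
have p0 : 0 < 2 ^ n by rewrite expn_gt0.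
rewrite expnS mul2n -addnn -addnBA // modnDl modn_small //.
by rewrite subn1 prednK // leqnn.
Qed.
Definition z2m1 : Z2 := MkZ2 z2m1_coh.

Lemma z2add_coh (x y : Z2) :
  forall n, z2d x n.+1 + z2d y n.+1 = z2d x n + z2d y n %[mod 2 ^ n].
Proof.
by move=> n; rewrite -modnDm ((z2coh x) n).2 ((z2coh y) n).2.
Qed.
Definition z2add (x y : Z2) : Z2 := z2mod (z2add_coh x y).

Lemma z2mul_coh (x y : Z2) :
  forall n, z2d x n.+1 * z2d y n.+1 = z2d x n * z2d y n %[mod 2 ^ n].
Proof.
by move=> n; rewrite -modnMm ((z2coh x) n).2 ((z2coh y) n).2.
Qed.
Definition z2mul (x y : Z2) : Z2 := z2mod (z2mul_coh x y).

Definition z2opp (x : Z2) : Z2 := z2mul z2m1 x.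
Definition z2sub (x y : Z2) : Z2 := z2add x (z2opp y).

Definition z2zero : Z2 := z2nat 0.
Definition z2one : Z2 := z2nat 1.

Definition Z2unit (u : Z2) : Prop := exists v, z2mul u v = z2one.

(* O_{K_P} = Z_2[sqrt(-2)] : (a, b) stands for a + b sqrt(-2) *)
Definition OK2 := (Z2 * Z2)%type.
Definition ok_mul (x y : OK2) : OK2 :=
  (z2sub (z2mul x.1 y.1) (z2mul (z2nat 2) (z2mul x.2 y.2)),
   z2add (z2mul x.1 y.2) (z2mul x.2 y.1)).
Definition ok_one : OK2 := (z2one, z2zero).
Definition ok_unit (x : OK2) : Prop := exists y, ok_mul x y = ok_one.
Definition ok_conj (x : OK2) : OK2 := (x.1, z2opp x.2).
Definition ok_norm (x : OK2) : Z2 :=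
  z2add (z2mul x.1 x.1) (z2mul (z2nat 2) (z2mul x.2 x.2)).
Definition ok_of_Z2 (u : Z2) : OK2 := (u, z2zero).

(* The quadratic character chi_p of F_p^x = Q_2^x attached to K_P/F_p,
   restricted to units: by local class field theory its kernel is the norm
   group N(K_P^x); a unit u of Z_2 lies in N(K_P^x) iff u = N(z) with z a
   unit of O_{K_P} (K_P/F_p is totally ramified, so v_2(N z) = v_P(z)). *)
Definition chi_p (u : Z2) : int :=
  if `[< exists z : OK2, ok_unit z /\ ok_norm z = u >] then 1%R else (-1)%R.

Definition cubic_at (a : Z2) : Z2 :=
  z2add (z2sub (z2mul a (z2mul a a)) (z2mul (z2nat 93) a)) (z2nat 124).

From mathcomp Require Import all_boot all_algebra.
From mathcomp Require Import boolp.
From mathcomp Require Import zify ring.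
Import GRing.Theory.
Local Open Scope ring_scope.

(* Writing x = a + b sqrt(-2), the character
     chi(x) = chi_{-2}(a) * (-1)^[b = 2 mod 4],   chi_{-2}(a) = 1 iff a = 1, 3 mod 8,
   depends only on x mod 8, so its multiplicativity on units and its invariance
   under b |-> -b are finite checks in (Z/8)[sqrt(-2)].  On Z_2^x it is chi_{-2},
   which is the norm character: norms a^2 + 2 b^2 of units are 1 or 3 mod 8, and
   conversely u = 1 mod 8 is a square s^2 (Hensel) while u = 3 mod 8 is s^2 + 2. *)

Lemma z2_ext (x y : Z2) : (forall n, z2d x n = z2d y n) -> x = y.
Proof.
case: x => f hf; case: y => g hg /= fg.
have ef : f = g by apply: funext.
by subst g; rewrite (Prop_irrelevance hf hg).
Qed.

Lemma z2d_lt (x : Z2) n : (z2d x n < 2 ^ n)%N.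
Proof. exact: (z2coh x n).1. Qed.

Lemma z2d_mod (x : Z2) m n : (n <= m)%N -> (z2d x m %% 2 ^ n)%N = z2d x n.
Proof.
elim: m => [|m IHm]; first by rewrite leqn0 => /eqP ->; rewrite modn_small ?z2d_lt.
rewrite leq_eqVlt => /orP[/eqP ->|]; first by rewrite modn_small ?z2d_lt.
rewrite ltnS => le_nm; rewrite -(IHm le_nm) -(z2coh x m).2.
by rewrite modn_dvdm // dvdn_exp2l.
Qed.

Section Reduction.

Variable n : nat.
Hypothesis n_gt0 : (0 < n)%N.

Definition z2red (x : Z2) : 'Z_(2 ^ n) := (z2d x n)%:R.

Let two_exp_gt1 : (1 < 2 ^ n)%N.
Proof. by rewrite -{1}(expn0 2) ltn_exp2l. Qed.

Lemma z2red_nat k : z2red (z2nat k) = k%:R.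
Proof. by rewrite /z2red /= Zp_nat_mod. Qed.

Lemma z2redD x y : z2red (z2add x y) = z2red x + z2red y.
Proof. by rewrite /z2red /= Zp_nat_mod // natrD. Qed.

Lemma z2redM x y : z2red (z2mul x y) = z2red x * z2red y.
Proof. by rewrite /z2red /= Zp_nat_mod // natrM. Qed.

Lemma z2redN x : z2red (z2opp x) = - z2red x.
Proof.
rewrite /z2opp z2redM /z2red /= natrB ?expn_gt0 //.
have -> : (2 ^ n)%:R = 0 :> 'Z_(2 ^ n) by rewrite -Zp_nat_mod // modnn.
by rewrite sub0r mulN1r.
Qed.

Lemma z2redB x y : z2red (z2sub x y) = z2red x - z2red y.
Proof. by rewrite z2redD z2redN. Qed.

Lemma z2red_val x : z2red x = z2d x n :> nat.
Proof. by rewrite val_Zp_nat // modn_small ?z2d_lt. Qed.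

End Reduction.

Definition z2redE := (z2redD, z2redB, z2redN, z2redM, z2red_nat).

Lemma z2red_inj (x y : Z2) : (forall n, (0 < n)%N -> z2red n x = z2red n y) -> x = y.
Proof.
move=> exy; apply: z2_ext => -[|n].
  by have := z2d_lt x 0; have := z2d_lt y 0; rewrite !ltnS !leqn0 => /eqP -> /eqP ->.
by rewrite -(@z2red_val _ (ltn0Sn n) x) -(@z2red_val _ (ltn0Sn n) y) exy.
Qed.

Lemma square_lift (t w X : int) : (2 %| t - 1)%Z -> (4 %| X)%Z ->
  (2 * X %| t ^+ 2 - w)%Z -> (4 * X %| t ^+ 2 - w)%Z \/ (4 * X %| (t + X) ^+ 2 - w)%Z.
Proof.
move=> t_odd /dvdzP[Y ->] /dvdzP[q Eq].
have [/dvdzP[r Er] | /dvdzP[r Er]] : (2 %| q)%Z \/ (2 %| q + t)%Z by lia.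
  by left; apply/dvdzP; exists r; rewrite Eq Er; ring.
right; apply/dvdzP; exists (r + Y).
have -> : (t + Y * 4) ^+ 2 - w = (t ^+ 2 - w) + 8 * Y * t + 16 * Y ^+ 2 by ring.
by rewrite Eq (_ : q = r * 2 - t); [ring | lia].
Qed.

Lemma eqn_mod_dvdz (a b m : nat) : (a == b %[mod m])%N = (m%:Z %| a%:Z - b%:Z)%Z.
Proof. by rewrite -eqz_mod_dvd !modz_nat eqz_nat. Qed.

Fixpoint sqrt_approx (u : Z2) (k : nat) : nat :=
  if k is k.+1 then
    let t := sqrt_approx u k in
    if (t * t == z2d u (k + 4) %[mod 2 ^ (k + 4)])%N then t else (t + 2 ^ (k + 2))%N
  else 1%N.

Lemma sqrt_approx_coh u k : (sqrt_approx u k.+1 = sqrt_approx u k %[mod 2 ^ k])%N.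
Proof.
rewrite /=; case: ifP => // _.
by rewrite expnD mulnC addnC modnMDl.
Qed.

Lemma sqrt_approxP u : z2d u 3 = 1%N -> forall k,
  odd (sqrt_approx u k) /\ (sqrt_approx u k * sqrt_approx u k = z2d u (k + 3) %[mod 2 ^ (k + 3)])%N.
Proof.
move=> u3; elim=> [|k [t_odd t_sq]]; first by rewrite u3.
rewrite /= (_ : (k.+1 + 3 = k + 4)%N); last by lia.
set t := sqrt_approx u k; set w := z2d u (k + 4).
have e3 : (2 ^ (k + 3) = 2 * 2 ^ (k + 2))%N by rewrite -expnS; congr expn; lia.
have e4 : (2 ^ (k + 4) = 4 * 2 ^ (k + 2))%N by rewrite -(expnD 2 2); congr expn; lia.
have t_sq_w : (t * t = w %[mod 2 ^ (k + 3)])%N.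
  by rewrite t_sq /w (@z2d_mod u (k + 4)) ?modn_small ?z2d_lt ?leq_add2l.
case: ifP => [/eqP // | not_sq].
split; first by rewrite oddD t_odd addn2 expnS oddM.
have X4 : (4 %| (2 ^ (k + 2))%N%:Z)%Z by apply/dvdzP; exists (2 ^ k)%N%:Z; rewrite -PoszM expnD.
have t_odd' : (2 %| t%:Z - 1)%Z by lia.
move: not_sq; rewrite eqn_mod_dvdz e4 !PoszM -expr2 => not_sq.
move/eqP: t_sq_w; rewrite eqn_mod_dvdz e3 !PoszM -expr2.
case/(square_lift _ _ _ t_odd' X4) => [|sq]; first by rewrite not_sq.
by apply/eqP; rewrite eqn_mod_dvdz !PoszM PoszD -expr2.
Qed.

Lemma z2_sqrt (u : Z2) : z2red 3 u = 1 -> exists s, z2mul s s = u.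
Proof.
move=> u1; have u3 : z2d u 3 = 1%N by rewrite -(@z2red_val 3) // u1.
exists (z2mod (sqrt_approx_coh u)); apply: z2_ext => n /=.
have [_ sq] := sqrt_approxP _ u3 n.
rewrite modnMm -(modn_dvdm _ (dvdn_exp2l 2 (leq_addr 3 n))) sq.
by rewrite modn_dvdm ?dvdn_exp2l ?leq_addr // z2d_mod // leq_addr.
Qed.

(* A computable stand-in for [forall a : 'Z_8, P a], whose enumeration is locked. *)
Definition all_Z8 (P : pred 'Z_8) : bool := all P [seq inZp i | i <- iota 0 8].

Lemma all_Z8P (P : pred 'Z_8) : reflect (forall a, P a) (all_Z8 P).
Proof.
apply: (iffP allP) => [Ps a | Pa a _]; last exact: Pa.
by rewrite -(valZpK a); apply: Ps; apply: map_f; rewrite mem_iota ltn_ord.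
Qed.

Definition chi_m2 (a : 'Z_8) : int := if a \in [:: 1; 3] then 1 else -1.

Definition chi_mod8 (a b : 'Z_8) : int := chi_m2 a * (if 2 * b == 4 then -1 else 1).

Lemma chi_mod8_sign a b : chi_mod8 a b = 1 \/ chi_mod8 a b = -1.
Proof.
by rewrite /chi_mod8 /chi_m2; case: ifP; case: ifP; rewrite ?mulr1 ?mulrN1 ?opprK; auto.
Qed.

Lemma chi_mod8N a b : chi_mod8 a (- b) = chi_mod8 a b.
Proof. by rewrite /chi_mod8 mulrN eqr_oppLR. Qed.

Lemma mod8_unit_of_mul_eq1 (a b c d : 'Z_8) : a * c - 2 * (b * d) = 1 -> a \is a GRing.unit.
Proof.
have /all_Z8P chk : all_Z8 (fun a => all_Z8 (fun b => all_Z8 (fun c => all_Z8 (fun d =>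
  (a * c - 2 * (b * d) == 1) ==> (a \is a GRing.unit))))) by vm_compute.
by move/eqP; move: (chk a) => /all_Z8P/(_ b)/all_Z8P/(_ c)/all_Z8P/(_ d)/implyP.
Qed.

Lemma chi_mod8M (a b c d : 'Z_8) : a \is a GRing.unit -> c \is a GRing.unit ->
  chi_mod8 (a * c - 2 * (b * d)) (a * d + b * c) = chi_mod8 a b * chi_mod8 c d.
Proof.
have /all_Z8P chk : all_Z8 (fun a => all_Z8 (fun b => all_Z8 (fun c => all_Z8 (fun d =>
  (a \is a GRing.unit) ==> (c \is a GRing.unit) ==>
  (chi_mod8 (a * c - 2 * (b * d)) (a * d + b * c) == chi_mod8 a b * chi_mod8 c d))))) by vm_compute.
move=> Ua Uc; move: (chk a) => /all_Z8P/(_ b)/all_Z8P/(_ c)/all_Z8P/(_ d).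
by move=> /implyP/(_ Ua)/implyP/(_ Uc)/eqP.
Qed.

Lemma norm_mod8_unit (a b : 'Z_8) : a \is a GRing.unit -> a ^+ 2 + 2 * b ^+ 2 \in [:: 1; 3].
Proof.
have /all_Z8P chk : all_Z8 (fun a => all_Z8 (fun b =>
  (a \is a GRing.unit) ==> (a ^+ 2 + 2 * b ^+ 2 \in [:: 1; 3]))) by vm_compute.
by move: (chk a) => /all_Z8P/(_ b)/implyP.
Qed.

Definition ok_chi (x : OK2) : int := chi_mod8 (z2red 3 x.1) (z2red 3 x.2).

Lemma ok_unit_mod8 (x : OK2) : ok_unit x -> z2red 3 x.1 \is a GRing.unit.
Proof.
case=> y /(congr1 (fun z => z2red 3 z.1)) /=.
by rewrite !z2redE //; apply: mod8_unit_of_mul_eq1.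
Qed.

Lemma ok_chiM (x y : OK2) : ok_unit x -> ok_unit y ->
  ok_chi (ok_mul x y) = ok_chi x * ok_chi y.
Proof.
by move=> /ok_unit_mod8 Ux /ok_unit_mod8 Uy; rewrite /ok_chi /= !z2redE // chi_mod8M.
Qed.

Lemma ok_chi_conj (x : OK2) : ok_chi (ok_conj x) = ok_chi x.
Proof. by rewrite /ok_chi /= z2redN // chi_mod8N. Qed.

Lemma z2red_norm n (z : OK2) : (0 < n)%N ->
  z2red n (ok_norm z) = z2red n z.1 ^+ 2 + 2 * z2red n z.2 ^+ 2.
Proof. by move=> n_gt0; rewrite /ok_norm !z2redE // !expr2. Qed.

Lemma ok_unit_of_norm (z : OK2) : Z2unit (ok_norm z) -> ok_unit z.
Proof.
case=> w Nw; exists (z2mul z.1 w, z2mul (z2opp z.2) w).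
congr pair; apply: z2red_inj => n n_gt0; have := congr1 (z2red n) Nw.
  by rewrite z2redM // z2red_norm // /z2one !z2redE // => <-; ring.
by rewrite /z2zero !z2redE // => _; ring.
Qed.

Lemma Z2unit_normP (u : Z2) : Z2unit u ->
  (exists z, ok_unit z /\ ok_norm z = u) <-> z2red 3 u \in [:: 1; 3].
Proof.
move=> Uu; split=> [[z [Uz <-]] | ].
  by rewrite z2red_norm //; apply: norm_mod8_unit; apply: ok_unit_mod8.
have normP (z : OK2) : ok_norm z = u -> exists z, ok_unit z /\ ok_norm z = u.
  by move=> Nz; exists z; split=> //; apply: ok_unit_of_norm; rewrite Nz.
rewrite !inE => /orP[/eqP u1 | /eqP u3].
  have [s ss] := z2_sqrt u u1.
  apply: (normP (s, z2zero)); apply: z2red_inj => n n_gt0.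
  by rewrite z2red_norm // -ss !z2redE //; ring.
have [s ss] : exists s, z2mul s s = z2sub u (z2nat 2).
  by apply: z2_sqrt; rewrite !z2redE // u3; apply/eqP.
apply: (normP (s, z2one)); apply: z2red_inj => n n_gt0.
have := congr1 (z2red n) ss; rewrite z2red_norm // /z2one !z2redE // => ss_n.
by rewrite -[z2red n u](subrK 2) -ss_n; ring.
Qed.

Lemma ok_chi_Z2 (u : Z2) : Z2unit u -> ok_chi (ok_of_Z2 u) = chi_p u.
Proof.
move=> Uu; rewrite /chi_p (propext (Z2unit_normP u Uu)) asboolb.
by rewrite /ok_chi /chi_mod8 /= mulr1.
Qed.

Theorem mainTheorem5 (alpha_p : Z2) (Halpha : cubic_at alpha_p = z2zero) :
  exists chi : OK2 -> int,
    (forall x, ok_unit x -> chi x = 1%R \/ chi x = (-1)%R) /\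
    (forall x y, ok_unit x -> ok_unit y ->
       chi (ok_mul x y) = (chi x * chi y)%R) /\
    (forall u, Z2unit u -> chi (ok_of_Z2 u) = chi_p u) /\
    (forall x, ok_unit x -> chi (ok_conj x) = chi x).
Proof.
(* alpha_p only identifies F_p with Q_2; K_P = Q_2(sqrt(-2)) whichever prime p is. *)
exists ok_chi; split; first by move=> x _; apply: chi_mod8_sign.
split; first exact: ok_chiM.
split; first exact: ok_chi_Z2.
by move=> x _; apply: ok_chi_conj.
Qed.
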